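(* Let $K$ be a field of characteristic $p>0$ with algebraic closure $\overline{K}$, let $q$ be a power of $p$, and let $a\in K^{{\mathbb N}}$ be given by $a(n)=\sum_{i=1}^d\beta_i\alpha_i^n$ ($n\in{\mathbb N}$) with $\alpha_1,\dots,\alpha_d,\beta_1,\dots,\beta_d\in\overline{K}$. Let $c_0,c_1,\dots,c_r\in{\mathbb Z}$ (the $\alpha_i$ being nonzero whenever negative exponents occur). If $$\sum_{i=1}^d(\beta_i\alpha_i^{c_0})\otimes\alpha_i^{c_1}\otimes\cdots\otimes\alpha_i^{c_r}=0$$ in the $(r+1)$-fold tensor product $\overline{K}\otimes_{{\mathbb F}_q}\overline{K}\otimes_{{\mathbb F}_q}\cdots\otimes_{{\mathbb F}_q}\overline{K}$, then $S_q(c_0;c_1,\dots,c_r)\subseteq{\mathcal Z}(a)$.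
   Context: ${\mathbb N}=\{0,1,2,\dots\}$, ${\mathcal Z}(a)=\{n\in{\mathbb N}\mid a(n)=0\}$, and $S_q(c_0;c_1,\dots,c_r)=\{c_0+c_1q^{k_1}+\cdots+c_rq^{k_r}\mid k_1,\dots,k_r\in{\mathbb N}\}\cap{\mathbb N}$. *)

From HB Require Import structures.
From mathcomp Require Import all_boot all_order all_algebra.
Set Implicit Arguments. Unset Strict Implicit. Unset Printing Implicit Defensive.
Import Order.TTheory GRing.Theory Num.Theory.
Local Open Scope ring_scope.

Definition upd (L : Type) (m : nat) (x : {ffun 'I_m -> L}) (j : 'I_m) (y : L)
  : {ffun 'I_m -> L} := [ffun k => if k == j then y else x k].

(* Membership in F_q, viewed as the subfield {c | c^q = c} of L. *)
Definition inFq (L : fieldType) (q : nat) (c : L) : bool := c ^+ q == c.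

Definition multiadditive (L : fieldType) (W : zmodType) (m : nat)
  (M : {ffun 'I_m -> L} -> W) : Prop :=
  forall (x : {ffun 'I_m -> L}) (j : 'I_m) (y z : L),
    M (upd x j (y + z)) = M (upd x j y) + M (upd x j z).

Definition Fq_balanced (L : fieldType) (q : nat) (W : zmodType) (m : nat)
  (M : {ffun 'I_m -> L} -> W) : Prop :=
  forall (c : L), inFq q c -> forall (x : {ffun 'I_m -> L}) (j k : 'I_m),
    M (upd x j (c * x j)) = M (upd x k (c * x k)).

(* sum_{i in I} x_i(0) (x) ... (x) x_i(m-1) = 0 in the m-fold tensor product
   L (x)_{F_q} ... (x)_{F_q} L, stated via the universal property of the tensor
   product: every F_q-multilinear map (multiadditive + F_q-balanced, into an
   abelian group) kills it. *)
Definition tensor_sum_zero (L : fieldType) (q : nat) (I : finType) (m : nat)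
  (x : I -> {ffun 'I_m -> L}) : Prop :=
  forall (W : zmodType) (M : {ffun 'I_m -> L} -> W),
    multiadditive M -> Fq_balanced q M -> \sum_(i : I) M (x i) = 0.

Definition tensor_factors (L : fieldType) (r : nat) (alpha beta : L)
  (c0 : int) (c : 'I_r -> int) : {ffun 'I_r.+1 -> L} :=
  [ffun j => match unlift ord0 j with
             | None => beta * alpha ^ c0
             | Some j' => alpha ^ (c j')
             end].

Definition Sq (q : nat) (r : nat) (c0 : int) (c : 'I_r -> int) (n : nat) : Prop :=
  exists k : 'I_r -> nat, (n%:Z = c0 + \sum_(j < r) c j * (q ^ k j)%:Z)%R.

From HB Require Import structures.
From mathcomp Require Import all_boot all_order all_algebra.
Import Order.TTheory GRing.Theory Num.Theory.
Local Open Scope ring_scope.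

(** With [q] a power of the characteristic and exponents [k_1, ..., k_r], the
    map [x |-> x_0 * x_1 ^ (q ^ k_1) * ... * x_r ^ (q ^ k_r)] is additive in each
    argument (Frobenius) and [F_q]-balanced (elements of [F_q] are fixed by
    [x |-> x ^ q]), so it factors through the tensor product.  Applied to the
    vanishing tensor it gives [sum_i beta_i alpha_i ^ n = 0] for
    [n = c_0 + c_1 q ^ k_1 + ... + c_r q ^ k_r]. *)

Lemma exprz_sum (F : fieldType) (x : F) (I : Type) (s : seq I) (P : pred I)
    (f : I -> int) :
  x != 0 \/ (forall i, P i -> 0 <= f i) ->
  x ^ (\sum_(i <- s | P i) f i) = \prod_(i <- s | P i) x ^ f i.
Proof.
case=> [x_nz | f_ge0].
  by rewrite (big_morph _ (fun m n => expfzDr m n x_nz) (expr0z x)).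
suff [] : 0 <= \sum_(i <- s | P i) f i /\
          x ^ (\sum_(i <- s | P i) f i) = \prod_(i <- s | P i) x ^ f i by [].
elim/big_rec2: _ => [|i m y Pi [m_ge0 <-]]; first by rewrite expr0z.
by rewrite addr_ge0 ?f_ge0 // exprzD_ss // f_ge0 // m_ge0.
Qed.

Lemma pchar_nat_expn (R : nzSemiRingType) (p n : nat) :
  p \in [pchar R] -> [pchar R].-nat (p ^ n)%N.
Proof.
move=> pcharRp; rewrite (eq_pnat _ (pcharf_eq pcharRp)) pnatX.
by rewrite pnat_id ?(pcharf_prime pcharRp).
Qed.

Lemma inFq_expr_expn {L : fieldType} {q : nat} {x : L} :
  inFq q x -> forall m, x ^+ (q ^ m) = x.
Proof.
move/eqP=> xq; elim => [|m IHm]; first by rewrite expr1.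
by rewrite expnSr exprM IHm xq.
Qed.

Section FrobeniusMonomial.

Variables (L : fieldType) (q m : nat) (k : 'I_m -> nat).

Definition frobenius_monomial (x : {ffun 'I_m -> L}) : L :=
  \prod_j x j ^+ (q ^ k j).

Lemma frobenius_monomialD1 x j :
  frobenius_monomial x = x j ^+ (q ^ k j) * \prod_(i | i != j) x i ^+ (q ^ k i).
Proof. exact: bigD1. Qed.

Lemma frobenius_monomial_upd x j y :
  frobenius_monomial (upd x j y)
  = y ^+ (q ^ k j) * \prod_(i | i != j) x i ^+ (q ^ k i).
Proof.
rewrite (frobenius_monomialD1 _ j) ffunE eqxx; congr (_ * _).
by apply: eq_bigr => i /negbTE ij; rewrite ffunE ij.
Qed.

Lemma frobenius_monomial_multiadditive :
  [pchar L].-nat q -> multiadditive frobenius_monomial.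
Proof.
move=> q_pchar x j y z; rewrite !frobenius_monomial_upd -mulrDl.
by rewrite exprDn_pchar // pnatX q_pchar.
Qed.

Lemma frobenius_monomial_Fq_balanced : Fq_balanced q frobenius_monomial.
Proof.
move=> a Fq_a x j j'.
rewrite !frobenius_monomial_upd !exprMn !(inFq_expr_expn Fq_a).
by rewrite -!mulrA -!frobenius_monomialD1.
Qed.

End FrobeniusMonomial.

Arguments frobenius_monomial {L} q {m} k x.

Lemma frobenius_monomial_tensor_factors (L : fieldType) (q r : nat)
    (k : 'I_r -> nat) (alpha beta : L) (c0 : int) (c : 'I_r -> int) :
  alpha != 0 \/ (0 <= c0 /\ forall j, 0 <= c j) ->
  frobenius_monomial q (fun j => oapp k 0%N (unlift ord0 j))
    (tensor_factors alpha beta c0 c)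
  = beta * alpha ^ (c0 + \sum_j c j * (q ^ k j)%:Z).
Proof.
move=> alpha_ok; rewrite /frobenius_monomial big_ord_recl.
rewrite ffunE unlift_none expn0 expr1 -mulrA; congr (_ * _).
under eq_bigr => j _ do rewrite ffunE liftK exprnP exprz_exp.
case: alpha_ok => [alpha_nz | [c0_ge0 c_ge0]].
  by rewrite expfzDr // exprz_sum //; left.
have cq_ge0 j : 0 <= c j * (q ^ k j)%:Z by rewrite mulr_ge0.
by rewrite exprzD_ss ?c0_ge0 ?sumr_ge0 // exprz_sum //; right.
Qed.

Theorem proposition3p1 (K : fieldType) (L : closedFieldType)
  (iota : {rmorphism K -> L}) (p e d r : nat)
  (alpha beta : 'I_d -> L) (a : nat -> K) (c0 : int) (c : 'I_r -> int) :
  p \in [pchar K] ->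
  (forall x : L, algebraicOver iota x) ->
  (0 < e)%N ->
  (forall n : nat, iota (a n) = \sum_(i < d) beta i * alpha i ^+ n) ->
  ((c0 < 0) \/ (exists j, c j < 0) -> forall i, alpha i != 0) ->
  tensor_sum_zero (p ^ e) (fun i : 'I_d => tensor_factors (alpha i) (beta i) c0 c) ->
  forall n : nat, Sq (p ^ e) c0 c n -> a n = 0.
Proof.
move=> pcharKp _ _ a_sum alpha_nz tensor0 n [k n_def].
have alpha_ok i : alpha i != 0 \/ (0 <= c0 /\ forall j, 0 <= c j).
  have [alpha_i0 | ] := eqVneq (alpha i) 0; last by left.
  right; split=> [|j]; rewrite leNgt; apply: contra_eqN alpha_i0 => neg.
    by apply: alpha_nz; left.
  by apply: alpha_nz; right; exists j.
apply: (fmorph_inj iota); rewrite rmorph0 a_sum.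
pose M := @frobenius_monomial L (p ^ e) _ (fun j => oapp k 0%N (unlift ord0 j)).
rewrite -[RHS](tensor0 L M); last 2 first.
- exact/frobenius_monomial_multiadditive/pchar_nat_expn/(rmorph_pchar iota).
- exact: frobenius_monomial_Fq_balanced.
apply: eq_bigr => i _.
by rewrite /M frobenius_monomial_tensor_factors // -n_def exprnP.
Qed.
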